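(* Let $P$ be a finite poset and let $r$ be the length of the longest chains of $P$. The following are equivalent: (1) $\mathbb{E}(\mathrm{chain}(k);\mathrm{ddeg})=\mathbb{E}(\mathrm{uni};\mathrm{ddeg})$ for all $k=0,1,\ldots,r$; (2) $\mathbb{E}(\mathrm{mchain}(m);\mathrm{ddeg})=\mathbb{E}(\mathrm{uni};\mathrm{ddeg})$ for all $m\geq 0$; (3) $\mathbb{E}(\mathrm{mchain}(m);\mathrm{ddeg})=\mathbb{E}(\mathrm{uni};\mathrm{ddeg})$ for all $m=0,1,\ldots,r$; (4) $\mathbb{E}(\widehat{\mathrm{mchain}}(m);\mathrm{ddeg})=\mathbb{E}(\mathrm{uni};\mathrm{ddeg})$ for all $m\geq 0$; (5) $\mathbb{E}(\widehat{\mathrm{mchain}}(m);\mathrm{ddeg})=\mathbb{E}(\mathrm{uni};\mathrm{ddeg})$ for all $m=0,1,\ldots,r$.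
   Context: All posets are finite. For a probability distribution $\mu$ on $P$ and a function $f\colon P\to\mathbb{R}$, $\mathbb{E}(\mu;f)=\sum_{p\in P}f(p)\,\mathbb{P}(\mu;p)$. The down-degree $\mathrm{ddeg}(p)$ is the number of elements covered by $p$. $\mathrm{uni}$ is the uniform distribution on $P$. A $k$-chain is a sequence $c_0<c_1<\cdots<c_k$ of elements of $P$; an $m$-multichain is a sequence $c_0\le c_1\le\cdots\le c_m$; we write $p\in c$ if $p=c_i$ for some $i$. The $k$-chain distribution is $\mathbb{P}(\mathrm{chain}(k);p)=\#\{k\text{-chains } c: p\in c\}/\big((k+1)\cdot\#\{k\text{-chains}\}\big)$. The $m$-multichain distribution $\mathrm{mchain}(m)$ gives $p$ probability proportional to the number of $m$-multichains $c$ with $p\in c$ (normalized to total probability 1). The modified $m$-multichain distribution is $\mathbb{P}(\widehat{\mathrm{mchain}}(m);p)=\#\{(c,i): c\text{ an }m\text{-multichain},\ c_i=p\}/\big((m+1)\cdot\#\{m\text{-multichains}\}\big)$. *)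

From HB Require Import structures.
From mathcomp Require Import all_boot all_order all_algebra.
Set Implicit Arguments. Unset Strict Implicit. Unset Printing Implicit Defensive.
Import Order.TTheory GRing.Theory Num.Theory.

Section PosetDistributions.
Variables (d : Order.disp_t) (P : finPOrderType d).

Local Open Scope order_scope.

Definition coversb (q p : P) : bool :=
  (q < p) && [forall z : P, ~~ ((q < z) && (z < p))].

Definition ddeg (p : P) : nat := #|[set q : P | coversb q p]|.

Definition chains (k : nat) : {set k.+1.-tuple P} :=
  [set c : k.+1.-tuple P | sorted (fun x y : P => x < y) c].

Definition mchains (m : nat) : {set m.+1.-tuple P} :=
  [set c : m.+1.-tuple P | sorted (fun x y : P => x <= y) c].

Local Close Scope order_scope.
Local Open Scope ring_scope.

Definition uni (p : P) : rat := 1 / (#|P|%:R).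

Definition chain_dist (k : nat) (p : P) : rat :=
  #|[set c in chains k | p \in (c : seq P)]|%:R
    / ((k.+1)%:R * #|chains k|%:R).

Definition mchain_dist (m : nat) (p : P) : rat :=
  #|[set c in mchains m | p \in (c : seq P)]|%:R
    / (\sum_(q : P) #|[set c in mchains m | q \in (c : seq P)]|%:R).

Definition mchain_hat_dist (m : nat) (p : P) : rat :=
  (\sum_(c in mchains m) #|[set i : 'I_m.+1 | tnth c i == p]|%:R)
    / ((m.+1)%:R * #|mchains m|%:R).

Definition expect (mu : P -> rat) (f : P -> nat) : rat :=
  \sum_(p : P) (f p)%:R * mu p.

End PosetDistributions.

(* A j-chain is the support of exactly C(m, j) m-multichains, and summed over
   these multichains the multiplicities of each of its elements add up to
   C(m+1, j+1).  Hence, writing W_j(w) for the sum of a weight w over the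
   elements of all j-chains, the numerators and denominators of the three
   expectations are W_k(w), sum_j C(m, j) W_j(w) and sum_j C(m+1, j+1) W_j(w)
   for w = ddeg and w = 1.  So each condition says that a unitriangular
   binomial transform of the excess W_j(ddeg) - e W_j(1) vanishes, e being
   the target value; as the excess is 0 for j > r, all five conditions say
   that it vanishes identically. *)

From HB Require Import structures.
From mathcomp Require Import all_boot all_order all_algebra.
Import Order.TTheory GRing.Theory Num.Theory.
Set Implicit Arguments. Unset Strict Implicit. Unset Printing Implicit Defensive.

Local Open Scope ring_scope.

Lemma sum_binS (R : pzSemiRingType) m (a : nat -> R) :
  \sum_(j < m.+2) 'C(m.+1, j)%:R * a j =
  \sum_(j < m.+1) 'C(m, j)%:R * a j + \sum_(j < m.+1) 'C(m, j)%:R * a j.+1.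
Proof.
rewrite big_ord_recl [in X in _ = X + _]big_ord_recl !bin0.
under eq_bigr do rewrite lift0 binS natrD mulrDl.
rewrite big_split /= addrA; congr (_ + _ + _).
by rewrite big_ord_recr /= bin_small // mul0r addr0.
Qed.

Section PathSums.
Variables (d : Order.disp_t) (P : finPOrderType d) (R : comPzRingType).
Implicit Types (e : rel P) (F : seq P -> R) (w : P -> R) (x y : P) (s : seq P).

Definition supp_weight w s : R := \sum_(p in s) w p.
Definition seq_weight w s : R := \sum_(p <- s) w p.
Definition supp_invariant F := forall s1 s2, s1 =i s2 -> F s1 = F s2.

Definition path_sum e F k x : R := \sum_(c : k.-tuple P | path e x c) F (x :: c).

Lemma sum_tupleS n (F : seq P -> R) :
  \sum_(c : n.+1.-tuple P) F c = \sum_x \sum_(c : n.-tuple P) F (x :: c).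
Proof.
rewrite pair_big /= (reindex (fun p : P * n.-tuple P => [tuple of p.1 :: p.2])) //=.
exists (fun c : n.+1.-tuple P => (thead c, [tuple of behead c])) => [[x c] _ | c _].
  by congr (_, _); apply: val_inj.
by rewrite [RHS]tuple_eta.
Qed.

Lemma sum_sorted_path_sum e F k :
  \sum_(c : k.+1.-tuple P | sorted e c) F c = \sum_x path_sum e F k x.
Proof.
rewrite big_mkcond (sum_tupleS k (fun s => if sorted e s then F s else 0)).
apply: eq_bigr => x _.
by rewrite /path_sum [RHS]big_mkcond.
Qed.

Lemma path_sum0 e F x : path_sum e F 0 x = F [:: x].
Proof. by rewrite /path_sum (big_pred1 [tuple]) // => c; rewrite [c]tuple0 /= eqxx. Qed.

Lemma path_sumS e F k x :
  path_sum e F k.+1 x = \sum_(y | e x y) path_sum e (fun s => F (x :: s)) k y.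
Proof.
rewrite /path_sum big_mkcond (sum_tupleS k (fun s => if path e x s then F (x :: s) else 0)).
rewrite [RHS]big_mkcond; apply: eq_bigr => y _ /=.
by case: (e x y); [rewrite [RHS]big_mkcond | rewrite big1].
Qed.

Lemma path_sumDl e F a k x :
  path_sum e (fun s => a + F s) k x = a * path_sum e (fun=> 1) k x + path_sum e F k x.
Proof. by rewrite /path_sum mulr_sumr -big_split; apply: eq_bigr => c _; rewrite mulr1. Qed.

Lemma sum_le_lt x (T : P -> R) :
  \sum_(y | (x <= y)%O) T y = T x + \sum_(y | (x < y)%O) T y.
Proof. by rewrite (bigD1 x) //=; congr (_ + _); apply: eq_bigl => y; rewrite lt_def andbC. Qed.

Lemma supp_weight_invariant w : supp_invariant (supp_weight w).
Proof. by move=> s1 s2 eq_s; apply: eq_bigl => p; rewrite /= eq_s. Qed.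

Lemma supp_invariant_cons F x : supp_invariant F -> supp_invariant (fun s => F (x :: s)).
Proof. by move=> FI s1 s2 eq_s; apply: FI => y; rewrite !in_cons eq_s. Qed.

Lemma supp_weight1 w x : supp_weight w [:: x] = w x.
Proof. by rewrite /supp_weight (big_pred1 x) // => p; rewrite !inE. Qed.

Lemma supp_weight_cons w x s : x \notin s -> supp_weight w (x :: s) = w x + supp_weight w s.
Proof.
move=> xNs; rewrite /supp_weight (bigD1 x) ?mem_head //=; congr (_ + _).
apply: eq_bigl => p; rewrite in_cons.
by case: eqP => [->|_]; rewrite ?andbT // (negbTE xNs).
Qed.

Lemma lt_path_notin x y s : (x < y)%O -> path <%O y s -> x \notin y :: s.
Proof.
move=> xy ys; rewrite in_cons negb_or lt_eqF //=.
apply: contraL (order_path_min lt_trans ys) => xs.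
by apply/allPn; exists x => //; rewrite lt_gtF.
Qed.

(* The head x of a multichain is either repeated (the term y = x) or followed
   by a strictly larger element; Pascal's rule matches the two cases. *)
Lemma path_sum_le_binomial F m x : supp_invariant F ->
  path_sum <=%O F m x = \sum_(j < m.+1) 'C(m, j)%:R * path_sum <%O F j x.
Proof.
elim: m F x => [|m IH] F x FI; first by rewrite big_ord1 bin0 mul1r !path_sum0.
rewrite path_sumS sum_le_lt.
have -> : path_sum <=%O (fun s => F (x :: s)) m x = path_sum <=%O F m x.
  by apply: eq_bigr => c _; apply: FI => y; rewrite !in_cons; case: eqP.
rewrite IH // (sum_binS m (fun j => path_sum <%O F j x)); congr (_ + _).
under eq_bigr do rewrite (IH _ _ (supp_invariant_cons x FI)).
rewrite exchange_big; apply: eq_bigr => j _.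
by rewrite path_sumS mulr_sumr.
Qed.

Lemma path_sum_lt_supp_weightS w k x :
  path_sum <%O (supp_weight w) k.+1 x =
  w x * path_sum <%O (fun=> 1) k.+1 x + \sum_(y | (x < y)%O) path_sum <%O (supp_weight w) k y.
Proof.
rewrite !path_sumS mulr_sumr -big_split /=; apply: eq_bigr => y xy.
rewrite -path_sumDl; apply: eq_bigr => c yc.
by rewrite supp_weight_cons ?lt_path_notin.
Qed.

Lemma path_sum_le_seq_weightS w m x :
  path_sum <=%O (seq_weight w) m.+1 x =
  w x * path_sum <=%O (fun=> 1) m.+1 x + \sum_(y | (x <= y)%O) path_sum <=%O (seq_weight w) m y.
Proof.
rewrite !path_sumS mulr_sumr -big_split /=; apply: eq_bigr => y _.
by rewrite -path_sumDl; apply: eq_bigr => c _; rewrite /seq_weight big_cons.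
Qed.

(* Pascal's rule C(m+2, j+1) = C(m+1, j+1) + C(m+1, j); the second half
   absorbs the recursion of path_sum_lt_supp_weightS. *)
Lemma path_sum_le_seq_weight w m x :
  path_sum <=%O (seq_weight w) m x =
  \sum_(j < m.+1) 'C(m.+1, j.+1)%:R * path_sum <%O (supp_weight w) j x.
Proof.
elim: m x => [|m IH] x.
  by rewrite big_ord1 bin1 mul1r !path_sum0 supp_weight1 /seq_weight big_seq1.
rewrite path_sum_le_seq_weightS sum_le_lt IH.
rewrite (@path_sum_le_binomial (fun=> 1) _ _ (fun _ _ _ => erefl)).
under [X in _ + (_ + X)]eq_bigr do rewrite IH.
rewrite exchange_big /=.
under [X in _ = X]eq_bigr do rewrite binS natrD mulrDl.
rewrite big_split /= [X in _ = X + _]big_ord_recr /= bin_small // mul0r addr0.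
rewrite [X in _ = _ + X]big_ord_recl [X in w x * X]big_ord_recl !bin0.
rewrite !path_sum0 supp_weight1 !mul1r.
under [X in _ = _ + (_ + X)]eq_bigr do rewrite lift0 path_sum_lt_supp_weightS mulrDr mulrCA.
under [X in w x * (_ + X)]eq_bigr do rewrite lift0.
under [X in _ + (_ + X) = _]eq_bigr do rewrite -mulr_sumr.
rewrite big_split /= mulrDr mulr1 mulr_sumr.
by rewrite [RHS]addrCA -!addrA; congr (_ + _); exact: addrCA.
Qed.


Definition chain_weight k w : R := \sum_(c in chains P k) supp_weight w c.

Lemma sum_chains_path_sum F k : \sum_(c in chains P k) F c = \sum_x path_sum <%O F k x.
Proof. by rewrite -sum_sorted_path_sum; apply: eq_bigl => c; rewrite inE. Qed.

Lemma sum_mchains_path_sum F m : \sum_(c in mchains P m) F c = \sum_x path_sum <=%O F m x.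
Proof. by rewrite -sum_sorted_path_sum; apply: eq_bigl => c; rewrite inE. Qed.

Lemma sum_mchains_binomial F m : supp_invariant F ->
  \sum_(c in mchains P m) F c = \sum_(j < m.+1) 'C(m, j)%:R * \sum_(c in chains P j) F c.
Proof.
move=> FI; rewrite sum_mchains_path_sum; under eq_bigr do rewrite path_sum_le_binomial //.
by rewrite exchange_big; apply: eq_bigr => j _; rewrite sum_chains_path_sum mulr_sumr.
Qed.

Lemma sum_mchains_seq_weight w m :
  \sum_(c in mchains P m) seq_weight w c =
  \sum_(j < m.+1) 'C(m.+1, j.+1)%:R * chain_weight j w.
Proof.
rewrite sum_mchains_path_sum; under eq_bigr do rewrite path_sum_le_seq_weight.
by rewrite exchange_big; apply: eq_bigr => j _; rewrite /chain_weight sum_chains_path_sum mulr_sumr.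
Qed.

Lemma sum_card_mem n (A : {set n.-tuple P}) w :
  \sum_p w p * #|[set c in A | p \in (c : seq P)]|%:R = \sum_(c in A) supp_weight w c.
Proof.
under eq_bigr do rewrite -sum1_card natr_sum mulr_sumr.
rewrite (exchange_big_dep (fun c => c \in A)) => [|p c _]; last by rewrite inE => /andP[].
apply: eq_bigr => c cA; apply: eq_big => [p|p _]; last exact: mulr1.
by rewrite inE cA.
Qed.

Lemma sum_card_tnth n (A : {set n.-tuple P}) w :
  \sum_p w p * (\sum_(c in A) #|[set i | tnth c i == p]|%:R) = \sum_(c in A) seq_weight w c.
Proof.
under eq_bigr do rewrite mulr_sumr.
rewrite exchange_big /=; apply: eq_bigr => c _.
under eq_bigr do rewrite -sum1_card natr_sum mulr_sumr.
rewrite (exchange_big_dep xpredT) //= /seq_weight (big_tuple _ _ c).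
apply: eq_bigr => i _; rewrite (big_pred1 (tnth c i)) ?mulr1 // => p.
by rewrite inE eq_sym.
Qed.

End PathSums.

Lemma divf_eqE (F : fieldType) (a b c : F) : b != 0 -> a / b = c <-> a - c * b = 0.
Proof.
by move=> b0; split => [<-|/subr0_eq ->]; rewrite ?divfK ?subrr ?mulfK.
Qed.

Lemma unitriangular_eq0 (R : pzSemiRingType) (b : nat -> nat -> nat) (X : nat -> R) r :
  (forall m, b m m = 1%N) -> (forall j, (r < j)%N -> X j = 0) ->
  (forall m, (m <= r)%N -> \sum_(j < m.+1) (b m j)%:R * X j = 0) ->
  forall j, X j = 0.
Proof.
move=> b1 X_gt_r Xsum; elim/ltn_ind => j IH.
have [jr|/X_gt_r //] := leqP j r.
have := Xsum j jr; rewrite big_ord_recr /= big1 => [|i _]; last by rewrite IH ?mulr0.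
by rewrite b1 add0r mul1r.
Qed.

Section Expectations.
Variables (d : Order.disp_t) (P : finPOrderType d) (f : P -> nat).
Local Notation fR := (fun p => (f p)%:R : rat).
Local Notation one := (fun _ : P => 1 : rat).

Lemma chain_weight1 k : chain_weight k one = (k.+1 * #|chains P k|)%:R.
Proof.
rewrite /chain_weight natrM mulr_natr -sumr_const; apply: eq_bigr => c.
rewrite inE => /lt_sorted_uniq c_uniq.
by rewrite /supp_weight sumr_const (card_uniqP c_uniq) size_tuple.
Qed.

Lemma expect_chain_dist k :
  expect (chain_dist k) f = chain_weight k fR / chain_weight k one.
Proof.
rewrite /expect /chain_dist chain_weight1 natrM /chain_weight -sum_card_mem mulr_suml.
by apply: eq_bigr => p _; rewrite mulrA.
Qed.

Lemma expect_mchain_dist m :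
  expect (mchain_dist m) f =
  (\sum_(j < m.+1) 'C(m, j)%:R * chain_weight j fR) /
  (\sum_(j < m.+1) 'C(m, j)%:R * chain_weight j one).
Proof.
rewrite -!(sum_mchains_binomial _ (supp_weight_invariant _)) -!sum_card_mem.
rewrite [X in _ = _ / X](eq_bigr _ (fun p _ => mul1r _)) mulr_suml.
by apply: eq_bigr => p _; rewrite mulrA.
Qed.

Lemma expect_mchain_hat_dist m :
  expect (mchain_hat_dist m) f =
  (\sum_(j < m.+1) 'C(m.+1, j.+1)%:R * chain_weight j fR) /
  (\sum_(j < m.+1) 'C(m.+1, j.+1)%:R * chain_weight j one).
Proof.
have den : \sum_(c in mchains P m) seq_weight one c = (m.+1)%:R * #|mchains P m|%:R.
  rewrite mulr_natr -sumr_const; apply: eq_bigr => c _.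
  by rewrite /seq_weight (big_tuple _ _ c) sumr_const card_ord.
rewrite -!sum_mchains_seq_weight den -sum_card_tnth mulr_suml.
by apply: eq_bigr => p _; rewrite mulrA.
Qed.

End Expectations.

Lemma chains_neq0_le d (P : finPOrderType d) k n :
  (k <= n)%N -> chains P n != set0 -> chains P k != set0.
Proof.
elim: n => [|n IH]; first by rewrite leqn0 => /eqP->.
rewrite leq_eqVlt ltnS => /orP[/eqP-> //|kn] /set0Pn[c].
rewrite inE; case/tupleP: c => x c /= /path_sorted c_sorted.
by apply: IH kn _; apply/set0Pn; exists c; rewrite inE.
Qed.

Section Equivalence.
Variables (d : Order.disp_t) (P : finPOrderType d) (r : nat).
Hypotheses (chains_r : chains P r != set0)
  (chains_le_r : forall k, chains P k != set0 -> (k <= r)%N).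
Variables (f : P -> nat) (e : rat).
Local Notation fR := (fun p => (f p)%:R : rat).
Local Notation one := (fun _ : P => 1 : rat).

Let excess j := chain_weight j fR - e * chain_weight j one.

Lemma excess_gt j : (r < j)%N -> excess j = 0.
Proof.
move=> rj; have /eqP chains0 : chains P j == set0.
  by apply: contraLR rj => /chains_le_r; rewrite -leqNgt.
by rewrite /excess /chain_weight chains0 !big_set0 mulr0 subr0.
Qed.

Lemma sum_chain_weight1_neq0 m (b : nat -> nat) :
  (0 < b 0)%N -> \sum_(j < m.+1) (b j)%:R * chain_weight j one != 0.
Proof.
move=> b0; under eq_bigr do rewrite chain_weight1 -natrM.
rewrite -natr_sum pnatr_eq0 -lt0n big_ord_recl ltn_addr // !muln_gt0 b0 /= card_gt0.
exact: chains_neq0_le (leq0n r) chains_r.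
Qed.

Lemma expect_chain_dist_eqE k : (k <= r)%N -> expect (chain_dist k) f = e <-> excess k = 0.
Proof.
move=> kr; rewrite expect_chain_dist; apply: divf_eqE.
rewrite chain_weight1 pnatr_eq0 muln_eq0 negb_or /= -lt0n card_gt0.
exact: chains_neq0_le kr chains_r.
Qed.

Lemma expect_mchain_dist_eqE m :
  expect (mchain_dist m) f = e <-> \sum_(j < m.+1) 'C(m, j)%:R * excess j = 0.
Proof.
rewrite expect_mchain_dist; apply: iff_trans (divf_eqE _ _ (sum_chain_weight1_neq0 _ _)) _.
  by rewrite bin0.
rewrite mulr_sumr -sumrB.
by under eq_bigr do rewrite mulrCA -mulrBr.
Qed.

Lemma expect_mchain_hat_dist_eqE m :
  expect (mchain_hat_dist m) f = e <-> \sum_(j < m.+1) 'C(m.+1, j.+1)%:R * excess j = 0.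
Proof.
rewrite expect_mchain_hat_dist.
apply: iff_trans (divf_eqE _ _ (@sum_chain_weight1_neq0 m (fun j => 'C(m.+1, j.+1)) _)) _.
  by rewrite bin1.
rewrite mulr_sumr -sumrB.
by under eq_bigr do rewrite mulrCA -mulrBr.
Qed.

Lemma expect_chain_dist_tfae :
  [<-> (forall k, (k <= r)%N -> expect (chain_dist k) f = e);
       (forall m, expect (mchain_dist m) f = e);
       (forall m, (m <= r)%N -> expect (mchain_dist m) f = e);
       (forall m, expect (mchain_hat_dist m) f = e);
       (forall m, (m <= r)%N -> expect (mchain_hat_dist m) f = e)].
Proof.
have sum_excess0 (b : nat -> nat -> nat) m :
    (forall j, excess j = 0) -> \sum_(j < m.+1) (b m j)%:R * excess j = 0.
  by move=> excess0; rewrite big1 // => j _; rewrite excess0 mulr0.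
tfae.
- move=> chain_e m; apply/expect_mchain_dist_eqE/sum_excess0 => j.
  have [jr|/excess_gt //] := leqP j r.
  exact/(expect_chain_dist_eqE jr)/chain_e.
- by move=> mchain_e m _.
- move=> mchain_e m; apply/expect_mchain_hat_dist_eqE/(sum_excess0 (fun m j => 'C(m.+1, j.+1))).
  apply: (unitriangular_eq0 binn excess_gt) => k kr.
  exact/expect_mchain_dist_eqE/mchain_e.
- by move=> hat_e m _.
- move=> hat_e k kr; apply/(expect_chain_dist_eqE kr).
  apply: (unitriangular_eq0 (b := fun m j => 'C(m.+1, j.+1)) (fun m => binn m.+1) excess_gt).
  move=> m mr; exact/expect_mchain_hat_dist_eqE/hat_e.
Qed.

End Equivalence.

Theorem proposition2p4 (d : Order.disp_t) (P : finPOrderType d) (r : nat)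
  (hr_ex : @chains d P r != set0)
  (hr_max : forall k : nat, @chains d P k != set0 -> (k <= r)%N) :
  [<-> (forall k : nat, (k <= r)%N ->
          expect (@chain_dist d P k) (@ddeg d P) = expect (@uni d P) (@ddeg d P));
       (forall m : nat,
          expect (@mchain_dist d P m) (@ddeg d P) = expect (@uni d P) (@ddeg d P));
       (forall m : nat, (m <= r)%N ->
          expect (@mchain_dist d P m) (@ddeg d P) = expect (@uni d P) (@ddeg d P));
       (forall m : nat,
          expect (@mchain_hat_dist d P m) (@ddeg d P) = expect (@uni d P) (@ddeg d P));
       (forall m : nat, (m <= r)%N ->
          expect (@mchain_hat_dist d P m) (@ddeg d P) = expect (@uni d P) (@ddeg d P))].
Proof. exact: expect_chain_dist_tfae hr_ex hr_max (@ddeg d P) (expect (@uni d P) (@ddeg d P)). Qed.
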